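(* Let $M$ be a module over a ring, and let $(\Delta_{\mathcal{I}})_{\mathcal{I}\subseteq\mathcal{P}(M)}$ be the distributed spaces of the spatial constraint system $(\mathcal{P}(M),\subseteq,(\delta_S)_{S\subseteq M})$ (whose agents are the subsets $S\subseteq M$). Then $\Delta_{\{A,B\}}=\delta_{A\cap B}$ for every $A,B\subseteq M$.
   Context: $\delta_S(X)=X\oplus S=\{x+s : x\in X, s\in S\}$ is the dilation by $S$; each $\delta_S$ is a space function on the complete lattice $(\mathcal{P}(M),\subseteq)$, i.e. preserves directed unions, binary unions and $\emptyset$. For a family of space functions $(s_i)_{i\in G}$ on a complete lattice, the distributed space of a group $I\subseteq G$ is $\Delta_I=\max\{f \text{ space function} : f(X)\subseteq s_i(X)\text{ for all } X \text{ and all } i\in I\}$ (this greatest element exists). Here $G=\mathcal{P}(M)$ and $s_S=\delta_S$. *)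

From mathcomp Require Import all_boot all_order all_algebra.
From mathcomp Require Import boolp classical_sets.
Set Implicit Arguments. Unset Strict Implicit. Unset Printing Implicit Defensive.
Import GRing.Theory.
Local Open Scope classical_set_scope.
Local Open Scope ring_scope.

Definition dilation (M : zmodType) (S : set M) : set M -> set M :=
  fun X => [set z | exists x, exists s, X x /\ S s /\ z = x + s].

Definition directed_family (T : Type) (D : set (set T)) : Prop :=
  (exists X, D X) /\
  forall X Y, D X -> D Y -> exists2 Z, D Z & (X `<=` Z /\ Y `<=` Z).

Definition space_function (T : Type) (f : set T -> set T) : Prop :=
  [/\ (forall D : set (set T), directed_family D ->
         f [set x | exists2 X, D X & X x] = [set y | exists2 X, D X & f X y]),
      (forall X Y, f (X `|` Y) = f X `|` f Y)
    & f set0 = set0].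

Definition below_all (G T : Type) (s : G -> set T -> set T) (I : set G)
  (f : set T -> set T) : Prop :=
  space_function f /\ forall i, I i -> forall X, f X `<=` s i X.

Definition is_greatest_below (G T : Type) (s : G -> set T -> set T) (I : set G)
  (f : set T -> set T) : Prop :=
  below_all s I f /\ forall g, below_all s I g -> forall X, g X `<=` f X.

(* Distributed space Delta_I := max { f space function | f <= s_i, i in I }
   (chosen by Hilbert's epsilon; the paper asserts this maximum exists). *)
Definition distributed_space (G T : Type) (s : G -> set T -> set T) (I : set G)
  : set T -> set T :=
  xget (fun _ => set0) (is_greatest_below s I).

From mathcomp Require Import all_boot all_order all_algebra.
From mathcomp Require Import boolp classical_sets.
Local Open Scope classical_set_scope.
Local Open Scope ring_scope.
Import GRing.Theory.
Set Implicit Arguments. Unset Strict Implicit.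

(* A space function f is determined by its values on singletons. If f lies
   below delta_A and delta_B, it maps {x} into (x + A) ∩ (x + B), which is
   x + (A ∩ B) because translation by x is injective; hence f <= delta_(A ∩ B).
   Conversely delta_(A ∩ B) is a space function below delta_A and delta_B. *)

Lemma distributed_spaceE (G T : Type) (s : G -> set T -> set T) (I : set G)
    (f : set T -> set T) :
  is_greatest_below s I f -> distributed_space s I = f.
Proof.
move=> f_max; have [f_below le_f] := f_max.
have [g_below le_g] := xgetI (fun=> set0) f_max.
by apply: funext => X; apply/seteqP; split; [exact: le_f | exact: le_g].
Qed.

Lemma space_function_set1 (T : Type) (f : set T -> set T) :
  space_function f ->
  forall X y, f X y -> exists2 x, X x & f [set x] y.
Proof.
move=> [f_directed f_setU f_set0] X.
(* The subsets of X on which the claim holds form a directed family covering X. *)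
pose D := [set F | F `<=` X /\ forall y, f F y -> exists2 x, F x & f [set x] y].
have D_set1 x : X x -> D [set x].
  by split=> [z -> //|y fxy]; exists x.
have D_directed : directed_family D.
  split; first by exists set0; split=> [z //|y]; rewrite f_set0.
  move=> F1 F2 [F1X F1P] [F2X F2P]; exists (F1 `|` F2); last by split=> z; [left|right].
  split=> [z [/F1X|/F2X] //|y]; rewrite f_setU => -[/F1P|/F2P] [x Fx fxy].
  - by exists x => //; left.
  - by exists x => //; right.
have D_cover : [set x | exists2 F, D F & F x] = X.
  apply/seteqP; split=> [x [F [FX _] /FX //]|x Xx].
  by exists [set x] => //; apply: D_set1.
rewrite -{1}D_cover f_directed // => y [F [FX FP] /FP [x Fx fxy]].
by exists x => //; apply: FX.
Qed.

Section Dilation.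
Variable M : zmodType.
Implicit Types (A B C : set M) (X : set M).

Lemma dilation_space_function C : space_function (dilation C).
Proof.
split.
- move=> D _; apply/seteqP; split=> z /=.
  + by move=> [x [s [[X DX Xx] [Cs ->]]]]; exists X => //; exists x, s.
  + by move=> [X DX [x [s [Xx [Cs ->]]]]]; exists x, s; split=> //; exists X.
- move=> X Y; apply/seteqP; split=> z /=.
  + by move=> [x [s [[Xx|Yx] [Cs ->]]]]; [left|right]; exists x, s.
  + by move=> [|] [x [s [Xx [Cs ->]]]]; exists x, s; split=> //; [left|right].
- by apply/seteqP; split=> z //= [x [s [[]]]].
Qed.

Lemma dilationS A B X : A `<=` B -> dilation A X `<=` dilation B X.
Proof. by move=> AB z [x [s [Xx [As ->]]]]; exists x, s; split=> //; split=> //; apply: AB. Qed.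

Lemma dilation_set1I A B a :
  dilation A [set a] `&` dilation B [set a] `<=` dilation (A `&` B) [set a].
Proof.
move=> _ [[_ [s [/= -> [As ->]]]] [_ [t [/= -> [Bt /(addrI a) st]]]]].
by exists a, s; rewrite st in As *.
Qed.

Lemma dilation_setI_greatest_below A B :
  is_greatest_below (@dilation M) [set S | S = A \/ S = B] (dilation (A `&` B)).
Proof.
split.
  split=> [|S [->|->] X]; first exact: dilation_space_function.
  - by apply: dilationS; apply: subIsetl.
  - by apply: dilationS; apply: subIsetr.
move=> f [f_space f_le] X y /(space_function_set1 f_space) [x Xx fxy].
have fxA := f_le A (or_introl erefl) _ _ fxy.
have fxB := f_le B (or_intror erefl) _ _ fxy.
have [_ [s [-> [ABs ->]]]] := dilation_set1I (conj fxA fxB).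
by exists x, s.
Qed.

End Dilation.

Theorem mainTheorem15 (R : pzRingType) (M : lmodType R) (A B : set M) :
  distributed_space (@dilation M) [set S | S = A \/ S = B]
  = dilation (A `&` B).
Proof. exact/distributed_spaceE/dilation_setI_greatest_below. Qed.
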